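(* Let $d \ge 3$, $F \leq F' \leq \mathrm{Sym}(\Omega)$ with $F'$ preserving each $F$-orbit in $\Omega$, and let $n = [F':F]$. Then the map $\varphi: G(F,F') \to G_{n,d}$, $\varphi(\gamma) = (\rho_\gamma, \gamma)$, where $\rho_\gamma = (\rho_{\gamma,v})_{v \in V_d}$ and $\rho_{\gamma,v} = \alpha(\sigma(\gamma,\gamma^{-1}v))$, is a well-defined group homomorphism which is injective and continuous, and whose image is closed and cocompact in $G_{n,d}$.
   Context: $\Omega$ is a set with $|\Omega|=d$; $T_d$ is the $d$-regular tree with vertex set $V_d$, edge set $E_d$, and a coloring $c: E_d \to \Omega$ restricting at every vertex $v$ to a bijection from the set $E(v)$ of edges at $v$ onto $\Omega$. The local permutation of $g\in\mathrm{Aut}(T_d)$ at $v$ is $\sigma(g,v) = c|_{E(gv)} \circ g \circ (c|_{E(v)})^{-1}$. $U(F)$ is the group of $g$ with $\sigma(g,v) \in F$ for all $v$; $G(F,F')$ is the group of $g$ with $\sigma(g,v) \in F'$ for all $v$ and $\sigma(g,v) \in F$ for all but finitely many $v$, endowed with the group topology for which the inclusion of $U(F)$ (with topology induced from $\mathrm{Aut}(T_d)$) is continuous and open. $\Sigma_n = \{0,\dots,n-1\}$, $\mathfrak{S}_n = \mathrm{Sym}(\Sigma_n)$, $\mathfrak{S}_{n-1}$ the stabilizer of $0$. Fix a bijection $\Sigma_n \to F'/F$ sending $0$ to the coset $F$; $\alpha: F' \to \mathfrak{S}_n$ is the homomorphism induced by the left action of $F'$ on $F'/F$ (so $\alpha(F)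 \leq \mathfrak{S}_{n-1}$). $G_{n,d} = \mathfrak{S}_n^{V_d,\mathfrak{S}_{n-1}} \rtimes \mathrm{Aut}(T_d)$, where $\mathfrak{S}_n^{V_d,\mathfrak{S}_{n-1}}$ is the group of $(\sigma_v)_{v\in V_d}$ with $\sigma_v \in \mathfrak S_{n-1}$ for all but finitely many $v$, $\mathrm{Aut}(T_d)$ acting by $(\gamma\sigma)_v=\sigma_{\gamma^{-1}v}$; it carries the locally compact topology for which $\mathfrak{S}_{n-1}^{V_d}\rtimes\mathrm{Aut}(T_d)$ with the product topology is an open subgroup. *)

From HB Require Import structures.
From Stdlib Require List.
From mathcomp Require Import all_boot all_order all_fingroup.
Set Implicit Arguments. Unset Strict Implicit. Unset Printing Implicit Defensive.

(* The d-regular tree T_d with a legal edge colouring by Omega = 'I_d. *)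
(* Model: vertices are reduced words in the free product of d copies   *)
(* of Z/2 (no two consecutive letters equal), written with the most    *)
(* recent letter at the head.  The neighbour of v along colour c is    *)
(* [step v c] (multiply by the involution c); the edge {v, step v c}   *)
(* has colour c.  Hence E(v) <-> Omega via c |-> {v, step v c}, and    *)
(* c restricted to E(v) is a bijection onto Omega for every v.          *)

Definition word_ok d (s : seq 'I_d) : bool := sorted (fun a b : 'I_d => a != b) s.

Definition vert d := {s : seq 'I_d | word_ok s}.

Definition step_seq d (c : 'I_d) (s : seq 'I_d) : seq 'I_d :=
  if s is a :: s' then (if a == c then s' else c :: s) else [:: c].

Lemma step_ok d (c : 'I_d) (s : seq 'I_d) : word_ok s -> word_ok (step_seq c s).
Proof.
case: s => [|a s'] //=; case: eqP => [_|/eqP ne].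
  by move/path_sorted.
by rewrite /word_ok /= eq_sym ne.
Qed.

Definition step d (v : vert d) (c : 'I_d) : vert d :=
  exist _ (step_seq c (sval v)) (step_ok c (proj2_sig v)).

Definition adj d (u v : vert d) : bool := [exists c, step u c == v].

Record aut d := Aut {
  af : vert d -> vert d;
  ai : vert d -> vert d;
  afK : cancel af ai;
  aiK : cancel ai af;
  af_adj : forall u v, adj (af u) (af v) = adj u v }.

Definition aut_mul d (g h : aut d) : aut d.
Proof.
refine (@Aut d (af g \o af h) (ai h \o ai g) _ _ _).
- by move=> x /=; rewrite !afK.
- by move=> x /=; rewrite !aiK.
- by move=> u v /=; rewrite !af_adj.
Defined.

Definition aut_inv d (g : aut d) : aut d.
Proof.
refine (@Aut d (ai g) (af g) (aiK g) (afK g) _).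
by move=> u v; rewrite -(af_adj g) !aiK.
Defined.

(* Local permutation sigma(g,v) : c |-> colour of the edge g({v, step v c}),
   i.e. the c' with step (g v) c' = g (step v c).  (When the function is
   not injective -- which never happens for an automorphism -- we return 1.) *)
Definition lperm_fun d (g : aut d) (v : vert d) : 'I_d -> 'I_d :=
  fun c => odflt c [pick c' | step (af g v) c' == af g (step v c)].

Definition lperm d (g : aut d) (v : vert d) : {perm 'I_d} :=
  match boolP (injectiveb (lperm_fun g v)) with
  | AltTrue H => perm (injectiveP _ H)
  | AltFalse _ => 1%g
  end.

Definition in_U d (F : {set {perm 'I_d}}) (g : aut d) : Prop :=
  forall v, lperm g v \in F.

Definition in_GFF d (F F' : {set {perm 'I_d}}) (g : aut d) : Prop :=
  (forall v, lperm g v \in F') /\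
  exists S : seq (vert d), forall v, v \notin S -> lperm g v \in F.

(* Topology on G(F,F'): U(F) (with the topology induced from Aut(T_d),
   i.e. pointwise convergence on vertices) is an open subgroup; a basis of
   neighbourhoods of g is  g * {k in U(F) | k fixes the finite set S}. *)
Definition open_GFF d (F F' : {set {perm 'I_d}}) (U : aut d -> Prop) : Prop :=
  forall g, in_GFF F F' g -> U g ->
  exists S : seq (vert d), forall h, in_GFF F F' h ->
    in_U F (aut_mul (aut_inv g) h) ->
    (forall v, v \in S -> af (aut_mul (aut_inv g) h) v = v) -> U h.

(* G_{n,d} = S_n^{V_d, S_{n-1}} x| Aut(T_d).  Here [z] is the point 0  *)
(* of Sigma_n = 'I_n, S_{n-1} its stabiliser.  Elements are pairs       *)
(* (sigma, gamma); membership also requires the finiteness condition.  *)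
(* NB: mathcomp's perm product is (p * q) x = q (p x), so the          *)
(* composition p o q is written (q * p)%g below.                       *)
Definition Gel n d := ((vert d -> {perm 'I_n}) * aut d)%type.

Definition in_Gnd n d (z : 'I_n) (x : Gel n d) : Prop :=
  exists S : seq (vert d), forall v, v \notin S -> x.1 v z = z.

(* (sigma, g)(tau, h) = (sigma . g tau, g h),  (g tau)_v = tau_{g^-1 v} *)
Definition Gmul n d (x y : Gel n d) : Gel n d :=
  (fun v => (y.1 (ai x.2 v) * x.1 v)%g, aut_mul x.2 y.2).

Definition Ginv n d (x : Gel n d) : Gel n d :=
  (fun v => (x.1 (af x.2 v))^-1%g, aut_inv x.2).

(* basic neighbourhoods of 1 in the open subgroup S_{n-1}^{V_d} x| Aut(T_d)
   with the product topology *)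
Definition nbhd1 n d (z : 'I_n) (S : seq (vert d)) (x : Gel n d) : Prop :=
  (forall v, x.1 v z = z) /\
  (forall v, v \in S -> x.1 v = 1%g /\ af x.2 v = v).

Definition open_Gnd n d (z : 'I_n) (U : Gel n d -> Prop) : Prop :=
  forall x, in_Gnd z x -> U x ->
  exists S : seq (vert d), forall y, in_Gnd z y ->
    nbhd1 z S (Gmul (Ginv x) y) -> U y.

Definition closed_Gnd n d (z : 'I_n) (A : Gel n d -> Prop) : Prop :=
  open_Gnd z (fun x => ~ A x).

(* H cocompact: the coset space G_{n,d}/H (left cosets xH, quotient
   topology) is compact, i.e. every cover of G_{n,d} by open sets
   saturated under right multiplication by H has a finite subcover. *)
Definition cocompact_Gnd n d (z : 'I_n) (H : Gel n d -> Prop) : Prop :=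
  forall (I : Type) (U : I -> Gel n d -> Prop),
    (forall i, open_Gnd z (U i)) ->
    (forall i x h, in_Gnd z x -> H h -> U i x -> U i (Gmul x h)) ->
    (forall x, in_Gnd z x -> exists i, U i x) ->
    exists s : list I, forall x, in_Gnd z x -> exists2 i, List.In i s & U i x.

Definition phi n d (alpha : {perm 'I_d} -> {perm 'I_n}) (g : aut d) : Gel n d :=
  (fun v => alpha (lperm g (ai g v)), g).

(* The local permutations satisfy the cocycle rule
   sigma(g h, v) = sigma(h, v) sigma(g, h v), and alpha is a homomorphism on F'
   with alpha f fixing 0 exactly when f is in F; hence phi is a well-defined
   homomorphism, injective since its second component is gamma, and continuous
   since an automorphism fixing a finite star of vertices has trivial local
   permutations there.  The complement of the image is open, because leaving
   the image is witnessed at a single vertex.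

   For cocompactness let K be the set of pairs (sigma, gamma) with gamma
   fixing the root and every sigma_v in S_(n-1).  A root-fixing automorphism
   is the same thing as a compatible family of local permutations, so every
   x is k phi(h)^-1 with k in K: translate back to the root, then choose the
   local permutations of h from the root outwards in prescribed cosets of F,
   using that F' preserves the F-orbits to keep them compatible.  Finally K is
   compact: given an open cover of K without finite subcover, choosing the
   coordinates vertex by vertex (Koenig's lemma) yields a point of K no
   neighbourhood of which is finitely covered, which is absurd. *)

From Pilot Require Import Defs.
From Stdlib Require List.
From mathcomp Require Import all_boot all_order all_fingroup.
From Stdlib Require Import ClassicalEpsilon ProofIrrelevance FunctionalExtensionality Classical.
From Stdlib Require Import Lia.
From mathcomp Require Import zify.
(* Imported again after mathcomp so that [aut] is the tree automorphism record, not fingroup's [aut]. *)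
Import Defs.
Set Implicit Arguments. Unset Strict Implicit. Unset Printing Implicit Defensive.
Local Open Scope group_scope.

Section Tree.
Variable d : nat.
Implicit Types (u v : vert d) (g h : aut d) (c : 'I_d) (s : seq 'I_d).

Definition root : vert d := exist _ [::] isT.

Lemma step_seqK c s : word_ok s -> step_seq c (step_seq c s) = s.
Proof.
case: s => [|a s] //=; first by rewrite eqxx.
case: eqP => [->|ne] /=.
  by case: s => [|b s] //= /andP [ne' _]; rewrite eq_sym (negbTE ne').
by rewrite eqxx.
Qed.

Lemma stepK v c : step (step v c) c = v.
Proof. by apply: val_inj; exact: step_seqK (valP v). Qed.

Lemma step_seq_inj s c1 c2 : step_seq c1 s = step_seq c2 s -> c1 = c2.
Proof.
case: s => [|a s] /=; first by case.
case: eqP => [<-|n1]; case: eqP => [e2|n2] //; last by case.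
- by move/(congr1 size) => /=; lia.
- by move/(congr1 size) => /=; lia.
Qed.

Lemma step_inj v c1 c2 : step v c1 = step v c2 -> c1 = c2.
Proof. by move/(congr1 val) => /= /step_seq_inj. Qed.

Lemma adjP u v : reflect (exists c, step u c = v) (adj u v).
Proof. by apply: (iffP existsP) => [[c /eqP]|[c /eqP]]; exists c. Qed.

Lemma af_inj g : injective (af g).
Proof. exact: can_inj (afK g). Qed.

Lemma aut_ext g h : af g =1 af h -> g = h.
Proof.
move=> e; have ei : ai g =1 ai h.
  by move=> y; apply: (@af_inj h); rewrite aiK -e aiK.
case: g h e ei => f1 i1 a1 b1 c1 [f2 i2 a2 b2 c2] /= e ei.
move: (functional_extensionality _ _ e) (functional_extensionality _ _ ei).
by move=> E1 E2; subst f2 i2; f_equal; apply: proof_irrelevance.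
Qed.

Lemma aut_mulKV g h : aut_mul g (aut_mul (aut_inv g) h) = h.
Proof. by apply: aut_ext => x /=; rewrite aiK. Qed.

Lemma lperm_fun_spec g v c :
  step (af g v) (lperm_fun g v c) = af g (step v c).
Proof.
rewrite /lperm_fun; case: pickP => [c' /eqP //|none].
have : adj (af g v) (af g (step v c)) by rewrite af_adj; apply/adjP; exists c.
by case/adjP => c' e; move: (none c'); rewrite e eqxx.
Qed.

Lemma lperm_fun_inj g v : injective (lperm_fun g v).
Proof.
move=> c1 c2 e; apply: (@step_inj v); apply: (@af_inj g).
by rewrite -!lperm_fun_spec e.
Qed.

Lemma lpermE g v : lperm g v =1 lperm_fun g v.
Proof.
move=> c; rewrite /lperm; destruct (boolP (injectiveb (lperm_fun g v))) as [H|H].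
  by rewrite permE.
by case/negP: H; apply/injectiveP; exact: lperm_fun_inj.
Qed.

Lemma lperm_spec g v c : step (af g v) (lperm g v c) = af g (step v c).
Proof. by rewrite lpermE lperm_fun_spec. Qed.

Lemma lperm_uniq g v c c' :
  step (af g v) c' = af g (step v c) -> lperm g v c = c'.
Proof. by rewrite -lperm_spec => /step_inj. Qed.

Lemma lperm_mul g h v : lperm (aut_mul g h) v = lperm h v * lperm g (af h v).
Proof.
by apply/permP => c; rewrite permM; apply: lperm_uniq => /=; rewrite !lperm_spec.
Qed.

(* The edge {v, step v a} has the same image seen from either endpoint. *)
Lemma lperm_step_edge g v a : lperm g (step v a) a = lperm g v a.
Proof.
apply: lperm_uniq; rewrite stepK -(stepK (af g v) (lperm g v a)).
by rewrite lperm_spec.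
Qed.

Lemma lperm_fixed_star g v :
  af g v = v -> (forall c, af g (step v c) = step v c) -> lperm g v = 1.
Proof.
move=> gv gstep; apply/permP => c; rewrite perm1; apply: lperm_uniq.
by rewrite gv gstep.
Qed.

Lemma lperm_inv g v : lperm (aut_inv g) v = (lperm g (ai g v))^-1.
Proof.
have : lperm (aut_mul g (aut_inv g)) v = 1.
  by apply: lperm_fixed_star => [|c] /=; rewrite aiK.
rewrite lperm_mul /= => E.
by rewrite -[LHS]mulg1 -(mulgV (lperm g (ai g v))) mulgA E mul1g.
Qed.

End Tree.

Section LocalData.
Variable d : nat.
Implicit Types (v : vert d) (g : aut d) (c : 'I_d) (s t : seq 'I_d).

Lemma word_ok_tail a s : word_ok (a :: s) -> word_ok s.
Proof. by case: s => [|b s] // /andP []. Qed.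

Lemma step_seq_ok_cons a s : word_ok (a :: s) -> step_seq a s = a :: s.
Proof. by case: s => [|b s] //= /andP [ne _]; rewrite eq_sym (negbTE ne). Qed.

Lemma insubd_cons a s : word_ok (a :: s) ->
  insubd (root d) (a :: s) = step (insubd (root d) s) a.
Proof.
move=> ok; have oks := word_ok_tail ok.
by apply: val_inj; rewrite /= !insubdK // step_seq_ok_cons.
Qed.

(* A family [f w] of candidate local permutations at the vertices [w] is
   compatible when the permutations at the two ends of every edge agree on
   its colour, as [lperm_step_edge] forces for an automorphism. *)
Definition compatible (f : seq 'I_d -> {perm 'I_d}) :=
  forall a s, word_ok (a :: s) -> f (a :: s) a = f s a.

Fixpoint relabel (f : seq 'I_d -> {perm 'I_d}) s : seq 'I_d :=
  if s is a :: s' then f s' a :: relabel f s' else [::].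

Fixpoint unrelabel (f : seq 'I_d -> {perm 'I_d}) t : seq 'I_d :=
  if t is a :: t' then (f (unrelabel f t'))^-1 a :: unrelabel f t' else [::].

Lemma relabel_ext (f1 f2 : seq 'I_d -> {perm 'I_d}) s :
  (forall k, (0 < k <= size s)%N -> f1 (drop k s) = f2 (drop k s)) ->
  relabel f1 s = relabel f2 s.
Proof.
elim: s => //= a s IH E.
have -> : f1 s = f2 s by have := E 1%N; rewrite /= drop0; apply; lia.
by rewrite IH // => k kle; apply: (E k.+1); lia.
Qed.

Variable f : seq 'I_d -> {perm 'I_d}.
Hypothesis f_compat : compatible f.

Lemma relabelK : cancel (relabel f) (unrelabel f).
Proof. by elim=> //= a s ->; rewrite permK. Qed.

Lemma unrelabelK : cancel (unrelabel f) (relabel f).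
Proof. by elim=> //= a t ->; rewrite permKV. Qed.

Lemma relabel_ok s : word_ok s -> word_ok (relabel f s).
Proof.
elim: s => // a [|b s] IH //= /andP [ne ok].
rewrite /word_ok /= -/(word_ok _) -/(relabel f s).
have := IH ok => /= ->; rewrite andbT.
by rewrite -(f_compat ok) (inj_eq perm_inj).
Qed.

Lemma unrelabel_ok t : word_ok t -> word_ok (unrelabel f t).
Proof.
elim: t => // a [|b t] IH //= /andP [ne ok].
have /= okt := IH ok; rewrite /word_ok /= -/(word_ok _) okt andbT.
apply/eqP => eab.
have : f ((f (unrelabel f t))^-1 b :: unrelabel f t) ((f (unrelabel f t))^-1 b) = b.
  by rewrite f_compat ?permKV.
by rewrite -{2}eab permKV => ab; move: ne; rewrite ab eqxx.
Qed.

Lemma relabel_step s c : word_ok s ->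
  relabel f (step_seq c s) = step_seq (f s c) (relabel f s).
Proof.
case: s => [|a s] //= ok; case: eqP => [<-|/eqP ne].
  by rewrite (f_compat ok) eqxx.
by rewrite /= -(f_compat ok) (inj_eq perm_inj) (negbTE ne).
Qed.

Definition relabel_vert v : vert d :=
  exist _ (relabel f (val v)) (relabel_ok (valP v)).
Definition unrelabel_vert v : vert d :=
  exist _ (unrelabel f (val v)) (unrelabel_ok (valP v)).

Lemma relabel_vertK : cancel relabel_vert unrelabel_vert.
Proof. by move=> v; apply: val_inj; rewrite /= relabelK. Qed.

Lemma unrelabel_vertK : cancel unrelabel_vert relabel_vert.
Proof. by move=> v; apply: val_inj; rewrite /= unrelabelK. Qed.

Lemma relabel_vert_step v c :
  relabel_vert (step v c) = step (relabel_vert v) (f (val v) c).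
Proof. by apply: val_inj; rewrite /= relabel_step ?(valP v). Qed.

Lemma relabel_vert_adj u v : adj (relabel_vert u) (relabel_vert v) = adj u v.
Proof.
apply/adjP/adjP => [[c e]|[c <-]]; last by exists (f (val u) c); rewrite relabel_vert_step.
exists ((f (val u))^-1 c); apply: (can_inj relabel_vertK).
by rewrite relabel_vert_step permKV.
Qed.

Definition aut_of_local : aut d := Aut relabel_vertK unrelabel_vertK relabel_vert_adj.

Lemma aut_of_local_root : af aut_of_local (root d) = root d.
Proof. exact: val_inj. Qed.

Lemma lperm_aut_of_local v : lperm aut_of_local v = f (val v).
Proof.
by apply/permP => c; apply: lperm_uniq => /=; rewrite relabel_vert_step.
Qed.

End LocalData.

Section RootFixing.
Variable d : nat.
Implicit Types (g : aut d) (s : seq 'I_d).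

Definition local_data g s : {perm 'I_d} := lperm g (insubd (root d) s).

Lemma local_data_compatible g : compatible (local_data g).
Proof. by move=> a s ok; rewrite /local_data insubd_cons // lperm_step_edge. Qed.

(* A root-fixing automorphism is the one built from its own local permutations. *)
Lemma root_fixing_relabel g s : af g (root d) = root d -> word_ok s ->
  val (af g (insubd (root d) s)) = relabel (local_data g) s.
Proof.
move=> g_root; elim: s => [|a s IH] ok.
  by rewrite (_ : insubd _ _ = root d) ?g_root //; apply: val_inj; rewrite insubdK.
have oks := word_ok_tail ok.
rewrite insubd_cons // -lperm_spec /= (IH oks).
case: s IH ok oks => [|b s] _ ok oks //=.
rewrite -(local_data_compatible g oks) (inj_eq perm_inj).
by case/andP: ok; rewrite eq_sym => /negbTE->.
Qed.

End RootFixing.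

Section Translation.
Variable d : nat.
Implicit Types (s t w : seq 'I_d) (c : 'I_d).

(* [translate w t] is the group product [w t] in the free product of copies
   of Z/2; left multiplication is a tree automorphism with trivial local
   permutations. *)
Definition translate w t : seq 'I_d := foldr (fun a acc => step_seq a acc) w t.

Lemma translate_ok w t : word_ok w -> word_ok (translate w t).
Proof. by move=> ok; elim: t => //= a t IH; exact: step_ok. Qed.

Lemma translate_step w c s : word_ok w ->
  translate w (step_seq c s) = step_seq c (translate w s).
Proof.
move=> okw; case: s => [|b s] //=; case: eqP => [->|ne] //=.
by rewrite step_seqK // translate_ok.
Qed.

Lemma translateA w s t : word_ok w ->
  translate w (translate s t) = translate (translate w s) t.
Proof. by move=> okw; elim: t => //= a t <-; rewrite translate_step. Qed.

Lemma translate_rev s (y : seq 'I_d) : translate (rev s ++ y) s = y.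
Proof. by elim: s y => //= a s IH y; rewrite rev_cons cat_rcons IH /= eqxx. Qed.

Lemma translate_nil t : word_ok t -> translate [::] t = t.
Proof.
elim: t => //= a t IH ok.
by rewrite IH ?(word_ok_tail ok) // step_seq_ok_cons.
Qed.

Lemma word_ok_rev s : word_ok s -> word_ok (rev s).
Proof.
rewrite /word_ok => ok.
have -> : (fun a b : 'I_d => a != b) = (fun b a : 'I_d => a != b).
  by apply: functional_extensionality => a; apply: functional_extensionality => b; rewrite eq_sym.
by rewrite rev_sorted.
Qed.

Variable u : vert d.

Definition transl (x : vert d) : vert d :=
  exist _ (translate (val u) (val x)) (translate_ok (val x) (valP u)).
Definition untransl (x : vert d) : vert d :=
  exist _ (translate (rev (val u)) (val x)) (translate_ok (val x) (word_ok_rev (valP u))).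

Lemma translK : cancel transl untransl.
Proof.
move=> x; apply: val_inj => /=; rewrite translateA ?word_ok_rev ?(valP u) //.
by rewrite -(cats0 (rev _)) translate_rev translate_nil // (valP x).
Qed.

Lemma untranslK : cancel untransl transl.
Proof.
move=> x; apply: val_inj => /=; rewrite translateA ?(valP u) //.
rewrite -{1}(revK (val u)) -(cats0 (rev (rev _))) translate_rev.
by rewrite translate_nil // (valP x).
Qed.

Lemma transl_step x c : transl (step x c) = step (transl x) c.
Proof. by apply: val_inj; rewrite /= translate_step // (valP u). Qed.

Lemma transl_adj x y : adj (transl x) (transl y) = adj x y.
Proof.
apply/adjP/adjP => [[c e]|[c <-]]; last by exists c; rewrite transl_step.
by exists c; apply: (can_inj translK); rewrite transl_step.
Qed.

Definition transl_aut : aut d := Aut translK untranslK transl_adj.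

Lemma transl_aut_root : af transl_aut (root d) = u.
Proof. exact: val_inj. Qed.

Lemma lperm_transl_aut x : lperm transl_aut x = 1.
Proof. by apply/permP => c; rewrite perm1; apply: lperm_uniq => /=; rewrite transl_step. Qed.

End Translation.

Lemma notin_map_cancel (T : eqType) (f f' : T -> T) (S : seq T) x :
  cancel f' f -> x \notin map f S -> f' x \notin S.
Proof. by move=> K; apply: contra => xS; apply/mapP; exists (f' x); rewrite ?K. Qed.

Section Phi.
Variable d : nat.
Variables (F F' : {group {perm 'I_d}}).
Hypothesis hFF' : F \subset F'.
Hypothesis horb : forall (f : {perm 'I_d}) (x : 'I_d), f \in F' -> f x \in orbit 'P F x.
Variables (n : nat) (n_pos : (0 < n)%N) (beta : 'I_n -> {set {perm 'I_d}}).
Hypothesis beta_inj : injective beta.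
Hypothesis beta_in : forall i, beta i \in rcosets F F'.
Hypothesis beta0 : beta (Ordinal n_pos) = F.
Variable alpha : {perm 'I_d} -> {perm 'I_n}.
Hypothesis halpha : forall f i, f \in F' -> beta (alpha f i) = beta i :* f.
Local Notation z := (Ordinal n_pos).
Implicit Types (g h k : aut d) (v : vert d) (x y : Gel n d).

Lemma alphaM f1 f2 : f1 \in F' -> f2 \in F' -> alpha (f1 * f2) = alpha f1 * alpha f2.
Proof.
move=> h1 h2; apply/permP => i; rewrite permM; apply: beta_inj.
by rewrite !halpha ?groupM // rcosetM.
Qed.

Lemma alpha1 : alpha 1 = 1.
Proof.
apply: (mulgI (alpha 1)); rewrite mulg1 -alphaM ?group1 //.
by rewrite mulg1.
Qed.

Lemma alphaV f : f \in F' -> alpha f^-1 = (alpha f)^-1.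
Proof.
by move=> hf; apply: (mulgI (alpha f)); rewrite -alphaM ?groupV // !mulgV alpha1.
Qed.

Lemma alpha_fix0 f : f \in F' -> (alpha f z == z) = (f \in F).
Proof.
move=> hf; apply/eqP/idP => [e|fF].
  by have := halpha z hf; rewrite e beta0 => ->; exact: rcoset_refl.
by apply: beta_inj; rewrite halpha // beta0 rcoset_id.
Qed.

(* An element of the coset [beta j] (i.e. [alpha g] sends [z] to [j]) that
   optionally maps [a] to a given point [b] of its F-orbit: a coset
   representative corrected by an element of F, which exists by [horb]. *)
Definition coset_perm (ab : option ('I_d * 'I_d)) (j : 'I_n) : {perm 'I_d} :=
  odflt 1 [pick g in F' | (alpha g z == j) &&
     (if ab is Some (a, b) then g a == b else true)].

Lemma coset_perm_in ab j : coset_perm ab j \in F'.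
Proof. by rewrite /coset_perm; case: pickP => [g /andP[]|] //=; rewrite group1. Qed.

Lemma coset_permP a b j : b \in orbit 'P F a ->
  alpha (coset_perm (Some (a, b)) j) z = j /\ coset_perm (Some (a, b)) j a = b.
Proof.
move=> hb; have [g0 g0F' Ej] := rcosetsP (beta_in j).
have : g0^-1 b \in orbit 'P F a by apply: orbit_trans (horb _ (groupVr g0F')) hb.
case/orbitP => f fF /=; rewrite apermE => fa.
have fg0F' : f * g0 \in F' by rewrite groupM // (subsetP hFF').
have fg0z : alpha (f * g0) z = j.
  by apply: beta_inj; rewrite halpha // beta0 Ej rcosetM rcoset_id.
have fg0a : (f * g0) a = b by rewrite permM fa permKV.
rewrite /coset_perm; case: pickP => [g /andP [_ /andP [/eqP -> /eqP ->]] //|].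
by move/(_ (f * g0)); rewrite fg0F' fg0z fg0a !eqxx.
Qed.

Lemma coset_perm_alpha j : alpha (coset_perm None j) z = j.
Proof.
have [g0 g0F' Ej] := rcosetsP (beta_in j).
have g0z : alpha g0 z = j by apply: beta_inj; rewrite halpha // beta0 Ej.
rewrite /coset_perm; case: pickP => [g /andP [_ /andP [/eqP -> _]] //|].
by move/(_ g0); rewrite g0F' g0z !eqxx.
Qed.

Lemma GFF_inv h : in_GFF F F' h -> in_GFF F F' (aut_inv h).
Proof.
case=> hF' [S hS]; split=> [v|]; first by rewrite lperm_inv groupV hF'.
exists (map (af h) S) => v vS; rewrite lperm_inv groupV; apply: hS.
exact: notin_map_cancel (aiK h) vS.
Qed.

Lemma phi_in_Gnd g : in_GFF F F' g -> in_Gnd z (phi alpha g).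
Proof.
case=> gF' [S gF]; exists (map (af g) S) => v vS /=.
have gv := gF _ (notin_map_cancel (aiK g) vS).
by apply/eqP; rewrite alpha_fix0 ?gF'.
Qed.

Lemma phi_mul g h : (forall v, lperm g v \in F') -> (forall v, lperm h v \in F') ->
  phi alpha (aut_mul g h) = Gmul (phi alpha g) (phi alpha h).
Proof.
move=> gF' hF'; congr pair; apply: functional_extensionality => v /=.
by rewrite lperm_mul aiK alphaM ?gF' ?hF'.
Qed.

Lemma Gmul_phiK x h : (forall v, lperm h v \in F') ->
  Gmul (Gmul x (phi alpha h)) (phi alpha (aut_inv h)) = x.
Proof.
case: x => s g hF'; congr pair; last by apply: aut_ext => w /=; rewrite aiK.
apply: functional_extensionality => v /=.
by rewrite aiK lperm_inv alphaV ?hF' // mulgA mulVg mul1g.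
Qed.

Definition star (S : seq (vert d)) : seq (vert d) :=
  flatten [seq v :: [seq step v c | c <- enum 'I_d] | v <- S].

Lemma star_self S v : v \in S -> v \in star S.
Proof.
move=> vS; apply/flattenP; exists (v :: [seq step v c | c <- enum 'I_d]) => //.
  by apply/mapP; exists v.
exact: mem_head.
Qed.

Lemma star_step S v c : v \in S -> step v c \in star S.
Proof.
move=> vS; apply/flattenP; exists (v :: [seq step v c | c <- enum 'I_d]).
  by apply/mapP; exists v.
by rewrite inE; apply/orP; right; apply/mapP; exists c; rewrite ?mem_enum.
Qed.

Lemma fixed_star k S v : v \in S ->
  (forall u, u \in star S -> af k u = u) -> af k v = v /\ lperm k v = 1.
Proof.
move=> vS kS; have kv : af k v = v by apply: kS; exact: star_self.
by split=> //; apply: lperm_fixed_star => // c; apply: kS; exact: star_step.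
Qed.

Lemma agree_near g h v : (forall u, u \in star [:: v] -> af (aut_mul (aut_inv g) h) u = u) ->
  af h v = af g v /\ lperm h v = lperm g v.
Proof.
move=> near; have [kv lk] := fixed_star (mem_head v [::]) near.
rewrite -{1 2}(aut_mulKV g h) lperm_mul /= lk mul1g.
by move: kv => /= ->.
Qed.

Lemma phi_continuous (U : Gel n d -> Prop) : open_Gnd z U ->
  open_GFF F F' (fun g => U (phi alpha g)).
Proof.
move=> hU g gG Ug; have [S HS] := hU _ (phi_in_Gnd gG) Ug.
exists (star S) => h hG kU kS; apply: HS; first exact: phi_in_Gnd.
set k := aut_mul (aut_inv g) h in kU kS.
have kF' v : lperm k v \in F' by apply: (subsetP hFF'); apply: kU.
have Ek v : (Gmul (Ginv (phi alpha g)) (phi alpha h)).1 v = alpha (lperm k (ai k v)).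
  rewrite /= afK -{1}(aut_mulKV g h) lperm_mul -/k.
  have -> : af k (ai h (af g v)) = v by rewrite /k /= aiK afK.
  by case: gG => gF' _; rewrite alphaM ?kF' ?gF' ?mulgK.
split=> [v|v vS]; rewrite Ek; first by apply/eqP; rewrite alpha_fix0 ?kF' ?kU.
have [kv lk] := fixed_star vS kS.
by rewrite -{1}kv afK lk alpha1.
Qed.

Lemma phi_image_intro x : in_Gnd z x -> (forall v, lperm x.2 v \in F') ->
  (forall w, x.1 w = alpha (lperm x.2 (ai x.2 w))) ->
  exists2 g, in_GFF F F' g & x = phi alpha g.
Proof.
case: x => s g [S sS] /= gF' sE; exists g; last first.
  by congr pair; apply: functional_extensionality.
split=> //; exists (map (ai g) S) => v vS.
have := sS _ (notin_map_cancel (afK g) vS); rewrite /= sE afK => /eqP.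
by rewrite alpha_fix0 ?gF'.
Qed.

(* Off the image, one coordinate of [x] is wrong: either a local permutation
   of [x.2] leaves F', or [x.1] differs from [rho] at some vertex; both
   persist on a neighbourhood fixing a star. *)
Lemma phi_image_closed : closed_Gnd z (fun x => exists2 g, in_GFF F F' g & x = phi alpha g).
Proof.
move=> [s g] xG nIm.
have [[v0 gv0]|[w0 sw0]] : (exists v, lperm g v \notin F') \/
    (exists w, s w <> alpha (lperm g (ai g w))).
- apply: NNPP => none; apply/nIm/phi_image_intro => // [v|w].
    by apply: NNPP => /negP gv; apply: none; left; exists v.
  by apply: NNPP => sw; apply: none; right; exists w.
- exists (star [:: v0]) => y _ [_ near] [h [hF' _] Ey]; subst y.
  have [_ hg] := agree_near (fun u uS => (near u uS).2).
  by move: (hF' v0); rewrite hg (negbTE gv0).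
- exists (star [:: ai g w0]) => y _ [_ near] [h _ Ey]; subst y.
  have [hg lhg] := agree_near (fun u uS => (near u uS).2).
  have [+ _] := near _ (star_self (mem_head _ [::])); rewrite /= aiK.
  have -> : ai h w0 = ai g w0 by rewrite -{1}(aiK g w0) -hg afK.
  by rewrite lhg => /(canRL (mulgK _)); rewrite mul1g invgK => /esym.
Qed.

Definition in_K y : Prop := af y.2 (root d) = root d /\ forall v, y.1 v z = z.

(* Local permutations are chosen from the root outwards: the one at [a :: w]
   must agree with the one at [w] on [a] and realise the prescribed coset
   [J] of the image vertex; the second component is that image. *)
Fixpoint local_choice (J : seq 'I_d -> 'I_n) (w : seq 'I_d) : {perm 'I_d} * seq 'I_d :=
  match w with
  | [::] => (coset_perm None (J [::]), [::])
  | a :: w' => let p := local_choice J w' in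
      (coset_perm (Some (a, p.1 a)) (J (p.1 a :: p.2)), p.1 a :: p.2)
  end.

Definition chosen_local J w := (local_choice J w).1.

Lemma chosen_local_in J w : chosen_local J w \in F'.
Proof. by case: w => [|a w]; exact: coset_perm_in. Qed.

Lemma local_choice_image J w : (local_choice J w).2 = relabel (chosen_local J) w.
Proof. by elim: w => //= a w ->. Qed.

Lemma chosen_local_cons J a w : let f := chosen_local J w in
  alpha (chosen_local J (a :: w)) z = J (f a :: (local_choice J w).2) /\
  chosen_local J (a :: w) a = f a.
Proof. by apply: coset_permP; apply: horb; exact: chosen_local_in. Qed.

Lemma chosen_local_compatible J : compatible (chosen_local J).
Proof. by move=> a w _; case: (chosen_local_cons J a w). Qed.

Lemma chosen_local_alpha J w : alpha (chosen_local J w) z = J (relabel (chosen_local J) w).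
Proof.
case: w => [|a w]; first exact: coset_perm_alpha.
by case: (chosen_local_cons J a w); rewrite local_choice_image.
Qed.

(* Every [x] is [k * phi h^-1] with [k] in the compact set [K]: translate
   [x.2^-1 root] to the root, then correct the [S_n]-coordinates one vertex
   at a time with [chosen_local]. *)
Lemma Gnd_decomp x : in_Gnd z x -> exists h, in_GFF F F' h /\ in_K (Gmul x (phi alpha h)).
Proof.
case: x => s g [S sS].
pose t := transl_aut (ai g (root d)).
pose J (w : seq 'I_d) : 'I_n :=
  if insub w is Some w' then (s (af g (af t w')))^-1 z else z.
pose k := aut_of_local (@chosen_local_compatible J).
pose h := aut_mul t k.
have lh q : lperm h q = chosen_local J (val q).
  by rewrite lperm_mul lperm_transl_aut mulg1 lperm_aut_of_local.
have hz v : alpha (lperm h (ai h (ai g v))) z = (s v)^-1 z.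
  rewrite lh chosen_local_alpha.
  have -> : relabel (chosen_local J) (val (ai h (ai g v))) = val (ai t (ai g v)).
    by change (val (af k (ai k (ai t (ai g v)))) = val (ai t (ai g v))); rewrite aiK.
  by rewrite /J valK !aiK.
exists h; split; last split.
- split=> [q|]; first by rewrite lh chosen_local_in.
  exists (map (ai h) (map (ai g) S)) => q qS.
  have gq : af g (af h q) \notin S.
    by apply: notin_map_cancel (afK g) _; apply: notin_map_cancel (afK h) _.
  apply/negPn; rewrite -alpha_fix0 ?lh ?chosen_local_in // -lh.
  by have := hz (af g (af h q)); rewrite !afK => ->; rewrite -{1}(sS _ gq) permK.
- change (af g (af t (af k (root d))) = root d).
  by rewrite aut_of_local_root transl_aut_root aiK.
- by move=> v /=; rewrite permM hz permKV.
Qed.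

Section Compactness.
Variables (I : Type) (U : I -> Gel n d -> Prop).
Hypothesis U_open : forall i, open_Gnd z (U i).
Hypothesis U_cover : forall x, in_Gnd z x -> exists i, U i x.

Definition fin_covered (P : Gel n d -> Prop) :=
  exists s : list I, forall y, in_K y -> P y -> exists2 i, List.In i s & U i y.

Lemma fin_covered_sub (P Q : Gel n d -> Prop) :
  (forall y, in_K y -> P y -> Q y) -> fin_covered Q -> fin_covered P.
Proof. by move=> PQ [s hs]; exists s => y Ky Py; apply: hs => //; apply: PQ. Qed.

Lemma not_fin_covered_inhabited (P : Gel n d -> Prop) :
  ~ fin_covered P -> exists y, in_K y /\ P y.
Proof.
move=> nc; apply: NNPP => none; apply: nc; exists nil => y Ky Py.
by case: none; exists y.
Qed.

Local Notation coord := ({perm 'I_n} * {perm 'I_d})%type.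

Definition coord_at y v : coord := (y.1 v, lperm y.2 v).
Definition vert_at (j : nat) : vert d := odflt (root d) (unpickle j).

Lemma vert_atK v : vert_at (pickle v) = v.
Proof. by rewrite /vert_at pickleK. Qed.

Lemma split_not_fin_covered (P : Gel n d -> Prop) w : ~ fin_covered P ->
  exists p : coord, ~ fin_covered (fun y => P y /\ coord_at y w = p).
Proof.
move=> nc; apply: NNPP => all_cov; apply: nc.
have cov p : fin_covered (fun y => P y /\ coord_at y w = p).
  by apply: NNPP => ncp; apply: all_cov; exists p.
suff [s hs] : exists s : list I, forall y, in_K y -> P y ->
    coord_at y w \in enum {: coord} -> exists2 i, List.In i s & U i y.
  by exists s => y Ky Py; apply: hs; rewrite ?mem_enum.
elim: (enum _) => [|p l [s2 hs2]]; first by exists nil.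
have [s1 hs1] := cov p.
exists (s1 ++ s2)%list => y Ky Py; rewrite inE => /orP [/eqP yp|yl].
  by have [i ? ?] := hs1 y Ky (conj Py yp); exists i => //; apply: List.in_or_app; left.
by have [i ? ?] := hs2 y Ky Py yl; exists i => //; apply: List.in_or_app; right.
Qed.

Definition agrees (l : seq coord) y :=
  forall j, (j < size l)%N -> coord_at y (vert_at j) = nth (1, 1) l j.

(* König's lemma: fix the coordinates at the vertices [vert_at 0, vert_at 1, ...]
   in turn, keeping at each stage a set without finite subcover. *)
Fixpoint branch (m : nat) : seq coord :=
  if m is m'.+1 then
    rcons (branch m') (epsilon (inhabits (1, 1)) (fun p =>
      ~ fin_covered (fun y => agrees (branch m') y /\ coord_at y (vert_at (size (branch m'))) = p)))
  else [::].

Lemma size_branch m : size (branch m) = m.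
Proof. by elim: m => //= m IH; rewrite size_rcons IH. Qed.

Lemma nth_branch j m : (j < m)%N -> nth (1, 1) (branch m) j = nth (1, 1) (branch j.+1) j.
Proof.
elim: m => // m IH jm; case: (ltnP j m) => [jlt|jge].
  by rewrite /= nth_rcons size_branch jlt IH.
by have -> : j = m by lia.
Qed.

Definition limit_coord (j : nat) : coord := nth (1, 1) (branch j.+1) j.

Lemma pickle_bound (T : seq (vert d)) : exists M, forall t, t \in T -> (pickle t < M)%N.
Proof.
elim: T => [|a T [M HM]]; first by exists 0%N.
exists (maxn M (pickle a).+1) => t; rewrite inE => /orP [/eqP ->|/HM].
  by rewrite leq_max leqnn orbT.
by move=> h; rewrite leq_max h.
Qed.

Lemma agrees_branch M (T : seq (vert d)) y : (forall t, t \in T -> (pickle t < M)%N) ->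
  agrees (branch M) y -> forall t, t \in T -> coord_at y t = limit_coord (pickle t).
Proof.
move=> TM yM t tT.
by rewrite -{1}(vert_atK t) yM ?size_branch ?TM // (nth_branch (TM _ tT)).
Qed.

Section Limit.
Hypothesis K_not_covered : ~ fin_covered (fun _ => True).

Lemma branch_not_fin_covered m : ~ fin_covered (agrees (branch m)).
Proof.
elim: m => [|m IH] /=.
  by move=> cov; apply: K_not_covered; apply: fin_covered_sub cov => y _ _ j.
have [p Hp] := split_not_fin_covered (vert_at (size (branch m))) IH.
have := epsilon_spec (inhabits (1, 1)) (fun p => ~ fin_covered (fun y =>
  agrees (branch m) y /\ coord_at y (vert_at (size (branch m))) = p)) (ex_intro _ p Hp).
set q := epsilon _ _ => Hq cov; apply: Hq; apply: fin_covered_sub cov => y Ky [ym yq] j.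
rewrite size_rcons nth_rcons ltnS leq_eqVlt => /orP [/eqP ->|jm].
  by rewrite ltnn eqxx.
by rewrite jm; apply: ym.
Qed.

Lemma limit_approx (T : seq (vert d)) :
  exists y, in_K y /\ forall t, t \in T -> coord_at y t = limit_coord (pickle t).
Proof.
have [M TM] := pickle_bound T.
have [y [Ky yM]] := @not_fin_covered_inhabited _ (@branch_not_fin_covered M).
by exists y; split=> //; exact: agrees_branch yM.
Qed.

Definition limit_sigma v := (limit_coord (pickle v)).1.
Definition limit_local (w : seq 'I_d) := (limit_coord (pickle (insubd (root d) w))).2.

Lemma limit_local_compatible : compatible limit_local.
Proof.
move=> a w ok; rewrite /limit_local insubd_cons //.
have [y [_ yT]] := limit_approx [:: step (insubd (root d) w) a; insubd (root d) w].
rewrite -!yT ?inE ?eqxx ?orbT //.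
exact: lperm_step_edge.
Qed.

Definition limit_aut := aut_of_local limit_local_compatible.
Definition limit_point : Gel n d := (limit_sigma, limit_aut).

Lemma limit_sigma_fix0 v : limit_sigma v z = z.
Proof.
have [y [[_ yz] yT]] := limit_approx [:: v].
by rewrite /limit_sigma -(yT v (mem_head _ _)) yz.
Qed.

Lemma limit_in_Gnd : in_Gnd z limit_point.
Proof. by exists nil => v _; exact: limit_sigma_fix0. Qed.

(* A point of [K] is close to [limit_point] as soon as its coordinates agree
   with the limit at the finitely many vertices of [S], of their images,
   and of the root-paths of the vertices of [S]: a root-fixing automorphism
   is determined along a path by the local permutations there. *)
Lemma near_limit (S : seq (vert d)) : exists T : seq (vert d), forall y, in_K y ->
  (forall t, t \in T -> coord_at y t = limit_coord (pickle t)) ->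
  nbhd1 z S (Gmul (Ginv limit_point) y).
Proof.
pose path_to v := [seq insubd (root d) (drop j (val v)) | j <- iota 1 (size (val v))].
pose around v := af limit_aut v :: path_to v.
exists (flatten (map around S)) => y [y_root yz] yT.
have inT v u : v \in S -> u \in around v -> u \in flatten (map around S).
  by move=> vS uv; apply/flattenP; exists (around v) => //; apply/mapP; exists v.
split=> [v|v vS] /=.
  by rewrite permM yz -{1}(limit_sigma_fix0 (af limit_aut v)) permK.
have /(congr1 fst) /= yv := yT _ (inT v _ vS (mem_head _ _)).
split; first by rewrite yv mulgV.
suff -> : af y.2 v = af limit_aut v by exact: relabel_vertK.
apply: val_inj; rewrite -{1}(valKd (root d) v) root_fixing_relabel ?(valP v) //.
apply: relabel_ext => j jv; rewrite /local_data /limit_local -yT //.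
apply: (inT v) => //; rewrite inE; apply/orP; right; apply/mapP.
by exists j => //; rewrite mem_iota add1n ltnS.
Qed.

End Limit.

Lemma K_fin_covered : fin_covered (fun _ => True).
Proof.
apply: NNPP => K_not_covered.
have [i Ui] := U_cover (limit_in_Gnd K_not_covered).
have [S HS] := U_open (limit_in_Gnd K_not_covered) Ui.
have [T HT] := near_limit K_not_covered S.
have [M TM] := pickle_bound T.
apply: (@branch_not_fin_covered K_not_covered M); exists [:: i] => y Ky yM.
exists i; first by left.
apply: HS; first by exists nil => v _; case: Ky => _ ->.
by apply: HT => //; exact: agrees_branch yM.
Qed.

End Compactness.

Lemma phi_image_cocompact : cocompact_Gnd z (fun x => exists2 g, in_GFF F F' g & x = phi alpha g).
Proof.
move=> I U U_open U_sat U_cover.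
have [s hs] := K_fin_covered U_open U_cover.
exists s => x xG; have [h [hG Kx]] := Gnd_decomp xG.
have [i iS Ui] := hs _ Kx Logic.I.
exists i => //; rewrite -(@Gmul_phiK x h); last by case: hG.
apply: U_sat => //; first by exists nil => v _; case: Kx => _ ->.
by exists (aut_inv h) => //; exact: GFF_inv.
Qed.

End Phi.

Theorem proposition2
  (d : nat) (hd : (3 <= d)%N)
  (F F' : {group {perm 'I_d}})
  (hFF' : F \subset F')
  (horb : forall (f : {perm 'I_d}) (x : 'I_d), f \in F' -> f x \in orbit 'P F x)
  (n : nat) (hn : n = #|F' : F|) (n_pos : (0 < n)%N)
  (beta : 'I_n -> {set {perm 'I_d}})
  (beta_inj : injective beta)
  (beta_in : forall i, beta i \in rcosets F F')
  (beta_onto : forall C, C \in rcosets F F' -> exists i, beta i = C)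
  (beta0 : beta (Ordinal n_pos) = F)
  (alpha : {perm 'I_d} -> {perm 'I_n})
  (halpha : forall f i, f \in F' -> beta (alpha f i) = beta i :* f) :
  let z := Ordinal n_pos in
  let Im := fun x : Gel n d => exists2 g, in_GFF F F' g & x = phi alpha g in
  (forall g, in_GFF F F' g -> in_Gnd z (phi alpha g)) /\
  (forall g h, in_GFF F F' g -> in_GFF F F' h ->
     phi alpha (aut_mul g h) = Gmul (phi alpha g) (phi alpha h)) /\
  (forall g h, in_GFF F F' g -> in_GFF F F' h ->
     phi alpha g = phi alpha h -> af g = af h) /\
  (forall U, open_Gnd z U -> open_GFF F F' (fun g => U (phi alpha g))) /\
  closed_Gnd z Im /\
  cocompact_Gnd z Im.
Proof.
move=> z Im.
split; first by move=> g; exact: (phi_in_Gnd (F:=F) (F':=F') beta_inj beta0 halpha).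
split; first by move=> g h [gF' _] [hF' _]; exact: (phi_mul (F':=F') beta_inj halpha gF' hF').
split; first by move=> g h _ _ /(congr1 snd) /= ->.
split; first exact: (phi_continuous hFF' beta_inj beta0 halpha).
split; first exact: (phi_image_closed (F:=F) (F':=F') beta_inj beta0 halpha).
exact: (phi_image_cocompact hFF' horb beta_inj beta_in beta0 halpha).
Qed.
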